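(* Let $\mathcal A$ be a linear time-invariant algorithm with $n$ oracles, state-space realization $(A,B,C,D)$ and transfer function $\hat H(z)$, let $\kappa\subseteq[n]$ with complement $\bar\kappa=[n]\setminus\kappa$, and suppose $D[\kappa]$ is invertible. Let $P$ be a permutation matrix reordering the oracle indices so that those in $\kappa$ come first, i.e. $$P\hat H(z)P^T=\begin{bmatrix}\hat H[\kappa](z)&\hat H[\kappa,\bar\kappa](z)\\ \hat H[\bar\kappa,\kappa](z)&\hat H[\bar\kappa](z)\end{bmatrix}.$$ Then $\mathcal B=\mathcal C_\kappa\mathcal A$ if and only if the transfer function $\hat H'(z)$ of $\mathcal B$ satisfies $$P\hat H'(z)P^T=\begin{bmatrix}\hat H[\kappa]^{-1}(z) & -\hat H[\kappa]^{-1}(z)\hat H[\kappa,\bar\kappa](z)\\ \hat H[\bar\kappa,\kappa](z)\hat H[\kappa]^{-1}(z) & \hat H[\bar\kappa](z)-\hat H[\bar\kappa,\kappa](z)\hat H[\kappa]^{-1}(z)\hat H[\kappa,\bar\kappa](z)\end{bmatrix}.$$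
   Context: A linear time-invariant algorithm with realization $(A,B,C,D)$ generates $x^{k+1}=Ax^k+Bu^k$, $y^k=Cx^k+Du^k$, $u^k=\phi(y^k)$; its transfer function is $\hat H(z)=C(zI-A)^{-1}B+D$. All oracles are assumed to be (sub)gradients $\partial f_i$ of convex functions, $i\in[n]=\{1,\dots,n\}$ (prox oracles being rewritten via $u=\mathrm{prox}_f(y)\iff y\in u+\partial f(u)$). For a matrix $M$ indexed by $[n]$ (blockwise, per oracle), $M[\kappa,\nu]$ is the submatrix with rows indexed by $\kappa$ and columns by $\nu$, and $M[\kappa]=M[\kappa,\kappa]$. The conjugation $\mathcal C_\kappa\mathcal A$ is the algorithm obtained by rewriting $\mathcal A$ to call, for each $i\in\kappa$, the oracle $\partial f_i^\star=(\partial f_i)^{-1}$ (with $f^\star$ the Fenchel conjugate) instead of $\partial f_i$; for oracles in $\kappa$ the roles of oracle argument and oracle output are swapped. Two algorithms are also called conjugates if they are oracle-equivalent to such a pair. *)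

From HB Require Import structures.
From mathcomp Require Import all_boot all_order all_algebra.
Set Implicit Arguments. Unset Strict Implicit. Unset Printing Implicit Defensive.
Import Order.TTheory GRing.Theory Num.Theory.
Local Open Scope ring_scope.

Definition ratfun (R : fieldType) := {fraction {poly R}}.

Definition liftc (R : fieldType) (c : R) : ratfun R := tofrac (c%:P).
Definition zvar (R : fieldType) : ratfun R := tofrac 'X.

Definition transfer (R : fieldType) (nx m : nat)
  (A : 'M[R]_nx) (B : 'M[R]_(nx, m)) (C : 'M[R]_(m, nx)) (D : 'M[R]_m)
  : 'M[ratfun R]_m :=
  map_mx (@liftc R) C *m invmx ((zvar R)%:M - map_mx (@liftc R) A)
    *m map_mx (@liftc R) B + map_mx (@liftc R) D.

Definition coords (n m : nat) (owner : 'I_m -> 'I_n) (kappa : {set 'I_n})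
  : {set 'I_m} := [set j | owner j \in kappa].

(* Submatrix M[K,L] (rows in K, columns in L, in increasing order). *)
Definition subm (T : Type) (m : nat) (M : 'M[T]_m) (K L : {set 'I_m})
  : 'M[T]_(#|K|, #|L|) :=
  \matrix_(i, j) M (enum_val i) (enum_val j).

(* Selection matrix S_K : 'M_(#|K|, m), so that M[K,L] = S_K M S_L^T. *)
Definition selmx (R : fieldType) (m : nat) (K : {set 'I_m}) : 'M[R]_(#|K|, m) :=
  \matrix_(i, j) (enum_val i == j)%:R.

Definition projmx (R : fieldType) (m : nat) (K : {set 'I_m}) : 'M[R]_m :=
  \matrix_(i, j) ((i == j) && (i \in K))%:R.

(* Conjugation C_K of the LTI algorithm (A,B,C,D) with respect to the oracle
   coordinates K (requires D[K] invertible).  For coordinates in K the roles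
   of oracle argument y and oracle output u are swapped: writing
   E := D[K]^{-1}, L := complement of K, one solves
     u_K = E (y_K - C_K x - D[K,L] u_L),
   and the new algorithm has input u' = (y_K, u_L) and output y' = (u_K, y_L),
   each kept in the original coordinate positions. *)
Section Conj.
Variables (R : fieldType) (nx m : nat) (K : {set 'I_m}).
Variables (A : 'M[R]_nx) (B : 'M[R]_(nx, m)) (C : 'M[R]_(m, nx)) (D : 'M[R]_m).

Definition conjG : 'M[R]_m :=
  (selmx R K)^T *m invmx (selmx R K *m D *m (selmx R K)^T) *m selmx R K.

Definition conjA : 'M[R]_nx := A - B *m conjG *m C.
Definition conjB : 'M[R]_(nx, m) :=
  B *m (conjG + projmx R (~: K) - conjG *m D *m projmx R (~: K)).
Definition conjC : 'M[R]_(m, nx) :=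
  projmx R (~: K) *m C - conjG *m C - projmx R (~: K) *m D *m conjG *m C.
Definition conjD : 'M[R]_m :=
  conjG - conjG *m D *m projmx R (~: K) + projmx R (~: K) *m D *m conjG
  + projmx R (~: K) *m (D - D *m conjG *m D) *m projmx R (~: K).
End Conj.

Definition oracle_equiv (R : fieldType) (nx1 nx2 m : nat)
  (A1 : 'M[R]_nx1) (B1 : 'M[R]_(nx1, m)) (C1 : 'M[R]_(m, nx1)) (D1 : 'M[R]_m)
  (A2 : 'M[R]_nx2) (B2 : 'M[R]_(nx2, m)) (C2 : 'M[R]_(m, nx2)) (D2 : 'M[R]_m) :=
  transfer A1 B1 C1 D1 = transfer A2 B2 C2 D2.

Definition is_conjugate (R : fieldType) (n nx nx2 m : nat) (owner : 'I_m -> 'I_n)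
  (kappa : {set 'I_n})
  (A : 'M[R]_nx) (B : 'M[R]_(nx, m)) (C : 'M[R]_(m, nx)) (D : 'M[R]_m)
  (A2 : 'M[R]_nx2) (B2 : 'M[R]_(nx2, m)) (C2 : 'M[R]_(m, nx2)) (D2 : 'M[R]_m) :=
  let K := coords owner kappa in
  oracle_equiv A2 B2 C2 D2 (conjA K A B C D) (conjB K B D) (conjC K C D) (conjD K D).

(* Write Q and P for the coordinate projectors onto K and onto its complement.
   The conjugate algorithm feeds y_K to the oracles in place of u_K and
   returns u_K in place of y_K: whenever y = H u it maps Q y + P u to
   Q u + P y, so its transfer function T satisfies T (Q H + P) = Q + P H.
   On the realization this is a resolvent computation, valid with any matrix
   Z in place of z I.  Read blockwise, the identity says
   T[K] H[K] = 1, T[K] H[K,L] + T[K,L] = 0, T[L,K] H[K] = H[L,K] and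
   T[L,K] H[K,L] + T[L] = H[L], whose only solution is the Schur-complement
   formula; conversely a matrix is determined by its four blocks. *)

From HB Require Import structures.
From mathcomp Require Import all_boot all_order all_algebra.
Set Implicit Arguments. Unset Strict Implicit. Unset Printing Implicit Defensive.
Import GRing.Theory.
Local Open Scope ring_scope.

Section Selection.
Variables (F : fieldType) (m : nat).
Implicit Types (J K L : {set 'I_m}) (M N : 'M[F]_m).

Lemma selmx_mul_tr K : selmx F K *m (selmx F K)^T = 1%:M.
Proof.
apply/matrixP=> i j; rewrite !mxE (bigD1 (enum_val i)) //= big1 => [|k /negbTE nk].
  by rewrite !mxE eqxx mul1r addr0 eq_sym (inj_eq enum_val_inj).
by rewrite !mxE eq_sym nk mul0r.
Qed.

Lemma selmx_mul_trC K : selmx F K *m (selmx F (~: K))^T = 0.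
Proof.
apply/matrixP=> i j; rewrite !mxE big1 // => k _; rewrite !mxE.
have := enum_valP i; have := enum_valP j; rewrite inE.
case: eqP => [<-|]; last by rewrite mul0r.
by case: eqP => [<- /negP//|]; rewrite mulr0.
Qed.

Lemma selmxC_mul_tr K : selmx F (~: K) *m (selmx F K)^T = 0.
Proof. by rewrite -[selmx F (~: K)]trmxK -trmx_mul selmx_mul_trC trmx0. Qed.

Lemma tr_selmx_mul K : (selmx F K)^T *m selmx F K = projmx F K.
Proof.
apply/matrixP=> i j; rewrite !mxE.
under eq_bigr do rewrite !mxE.
rewrite -(big_enum_val (fun x => ((x == i)%:R * (x == j)%:R : F))) /=.
rewrite big_mkcond (bigD1 i) //= big1 => [|k /negbTE nk]; last by rewrite nk mul0r if_same.
by rewrite eqxx mul1r addr0 eq_sym; case: (i \in K); rewrite ?andbT ?andbF.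
Qed.

Lemma projmxDC K : projmx F K + projmx F (~: K) = 1%:M.
Proof.
apply/matrixP=> i j; rewrite !mxE inE.
by case: (i \in K); case: (i == j); rewrite /= ?addr0 ?add0r.
Qed.

Lemma subm_selmx M K L : subm M K L = selmx F K *m M *m (selmx F L)^T.
Proof.
apply/matrixP=> i j; rewrite !mxE.
rewrite (bigD1 (enum_val j)) //= big1 => [|k /negbTE nk]; last by rewrite !mxE eq_sym nk mulr0.
rewrite !mxE eqxx mulr1 addr0.
rewrite (bigD1 (enum_val i)) //= big1 => [|k /negbTE nk]; last by rewrite !mxE eq_sym nk mul0r.
by rewrite !mxE eqxx mul1r addr0.
Qed.

Lemma selmx_tr_partition K :
  (selmx F K)^T *m selmx F K + (selmx F (~: K))^T *m selmx F (~: K) = 1%:M.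
Proof. by rewrite !tr_selmx_mul projmxDC. Qed.

Lemma subm_mulmx M N J K L :
  subm (M *m N) K L =
  subm M K J *m subm N J L + subm M K (~: J) *m subm N (~: J) L.
Proof.
rewrite !subm_selmx -[N in LHS]mul1mx -(selmx_tr_partition J).
by rewrite !(mulmxDl, mulmxDr) !mulmxA.
Qed.

Lemma selmx_projmx K : selmx F K *m projmx F K = selmx F K.
Proof. by rewrite -tr_selmx_mul mulmxA selmx_mul_tr mul1mx. Qed.

Lemma selmx_projmxC K : selmx F K *m projmx F (~: K) = 0.
Proof. by rewrite -tr_selmx_mul mulmxA selmx_mul_trC mul0mx. Qed.

Lemma selmxC_projmx K : selmx F (~: K) *m projmx F K = 0.
Proof. by rewrite -tr_selmx_mul mulmxA selmxC_mul_tr mul0mx. Qed.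

Lemma projmx_tr_selmx K : projmx F K *m (selmx F K)^T = (selmx F K)^T.
Proof. by rewrite -tr_selmx_mul -mulmxA selmx_mul_tr mulmx1. Qed.

Lemma projmxC_projmx K : projmx F (~: K) *m projmx F K = 0.
Proof. by rewrite -{1}tr_selmx_mul -mulmxA selmxC_projmx mulmx0. Qed.

Lemma projmx_projmxC K : projmx F K *m projmx F (~: K) = 0.
Proof. by rewrite -{1}tr_selmx_mul -mulmxA selmx_projmxC mulmx0. Qed.

Lemma projmx_idem K : projmx F K *m projmx F K = projmx F K.
Proof. by rewrite -{1}tr_selmx_mul -mulmxA selmx_projmx tr_selmx_mul. Qed.

Lemma subm_projmx_rows M N K L :
  subm (projmx F K *m M + projmx F (~: K) *m N) K L = subm M K L.
Proof.
by rewrite !subm_selmx mulmxDr !mulmxA selmx_projmx selmx_projmxC mul0mx addr0.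
Qed.

Lemma subm_projmxC_rows M N K L :
  subm (projmx F K *m M + projmx F (~: K) *m N) (~: K) L = subm N (~: K) L.
Proof.
by rewrite !subm_selmx mulmxDr !mulmxA selmx_projmx selmxC_projmx mul0mx add0r.
Qed.

Lemma subm1 K : subm 1%:M K K = 1%:M :> 'M[F]_#|K|.
Proof. by rewrite subm_selmx mulmx1 selmx_mul_tr. Qed.

Lemma subm1Cr K : subm 1%:M K (~: K) = 0 :> 'M[F]_(#|K|, #|~: K|).
Proof. by rewrite subm_selmx mulmx1 selmx_mul_trC. Qed.

Lemma subm1Cl K : subm 1%:M (~: K) K = 0 :> 'M[F]_(#|~: K|, #|K|).
Proof. by rewrite subm_selmx mulmx1 selmxC_mul_tr. Qed.

Lemma subm_blocks_inj M N K :
  subm M K K = subm N K K -> subm M K (~: K) = subm N K (~: K) ->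
  subm M (~: K) K = subm N (~: K) K -> subm M (~: K) (~: K) = subm N (~: K) (~: K) ->
  M = N.
Proof.
pose S := selmx F K; pose SL := selmx F (~: K).
have glue X : X = S^T *m subm X K K *m S + S^T *m subm X K (~: K) *m SL
                + SL^T *m subm X (~: K) K *m S + SL^T *m subm X (~: K) (~: K) *m SL.
  rewrite !subm_selmx -[X in LHS]mul1mx -[X in LHS]mulmx1 -(selmx_tr_partition K).
  by rewrite !(mulmxDl, mulmxDr) !mulmxA !addrA.
by move=> eKK eKL eLK eLL; rewrite (glue M) (glue N) eKK eKL eLK eLL.
Qed.

End Selection.

Lemma schur_block_solve (R : comUnitRingType) (k l : nat)
    (T11 M11 : 'M[R]_k) (T12 M12 : 'M[R]_(k, l))
    (T21 M21 : 'M[R]_(l, k)) (T22 M22 : 'M[R]_l) :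
  T11 *m M11 = 1%:M -> T11 *m M12 + T12 = 0 ->
  T21 *m M11 = M21 -> T21 *m M12 + T22 = M22 ->
  [/\ T11 = invmx M11, T12 = - (invmx M11 *m M12),
      T21 = M21 *m invmx M11 & T22 = M22 - M21 *m invmx M11 *m M12].
Proof.
move=> e11 e12 e21 e22; have [_ unitM11] := mulmx1_unit e11.
have T11E : T11 = invmx M11.
  by rewrite -[T11]mulmx1 -(mulmxV unitM11) mulmxA e11 mul1mx.
have T21E : T21 = M21 *m invmx M11 by rewrite -e21 -mulmxA mulmxV // mulmx1.
split=> //.
  by apply/eqP; rewrite -T11E -addr_eq0 addrC e12.
by rewrite -T21E -e22 addrC addKr.
Qed.

Lemma subm_swap_blocks (F : fieldType) (m : nat) (K : {set 'I_m}) (T M : 'M[F]_m) :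
  T *m (projmx F K *m M + projmx F (~: K)) = projmx F K + projmx F (~: K) *m M ->
  [/\ subm T K K = invmx (subm M K K),
      subm T K (~: K) = - (invmx (subm M K K) *m subm M K (~: K)),
      subm T (~: K) K = subm M (~: K) K *m invmx (subm M K K)
    & subm T (~: K) (~: K) = subm M (~: K) (~: K)
        - subm M (~: K) K *m invmx (subm M K K) *m subm M K (~: K)].
Proof.
rewrite -[projmx F (~: K) in LHS]mulmx1 -[projmx F K in RHS]mulmx1 => e.
have blk L L' := congr1 (fun Z => subm Z L L') e.
have := blk K K; have := blk K (~: K); have := blk (~: K) K; have := blk (~: K) (~: K).
rewrite /= !(subm_mulmx _ _ K) !(subm_projmx_rows, subm_projmxC_rows).
rewrite !(subm1, subm1Cr, subm1Cl) !(mulmx0, mulmx1, addr0) => eLL eLK eKL eKK.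
exact: schur_block_solve.
Qed.

Section SwapIdentity.
Variables (R : pzRingType) (nx m : nat).
Variables (Q P G D : 'M[R]_m) (Z A Phi Phi' : 'M[R]_nx).
Variables (B : 'M[R]_(nx, m)) (C : 'M[R]_(m, nx)).
Hypotheses (QP1 : Q + P = 1%:M) (PQ0 : P *m Q = 0) (PP : P *m P = P).
Hypotheses (GQ : G *m Q = G) (GP0 : G *m P = 0) (GDQ : G *m D *m Q = Q).
Hypotheses (PhiR : (Z - A) *m Phi = 1%:M).
Hypotheses (PhiL : Phi' *m (Z - (A - B *m G *m C)) = 1%:M).

(* With these factors, conjB = B Y, conjD = E Y and conjC = P C - E G C. *)
Local Notation H := (C *m Phi *m B + D).
Local Notation Y := (G + P - G *m D *m P).
Local Notation E := (Q + P *m D).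
Local Notation W := (C *m (Phi *m B)).

Lemma realization_swap_identity :
  ((P *m C - E *m G *m C) *m Phi' *m (B *m Y) + E *m Y) *m (Q *m H + P) = Q + P *m H.
Proof.
have HE : H = W + D by rewrite mulmxA.
have GDE : G *m D = Q + G *m D *m P.
  by rewrite -{1}[G *m D]mulmx1 -QP1 mulmxDr GDQ.
have YQ : Y *m Q = G.
  by rewrite mulmxBl mulmxDl GQ PQ0 -mulmxA PQ0 mulmx0 addr0 subr0.
have YP : Y *m P = P - G *m D *m P.
  by rewrite mulmxBl mulmxDl GP0 PP -mulmxA PP add0r.
have YM : Y *m (Q *m H + P) = 1%:M + G *m W.
  rewrite mulmxDr mulmxA YQ YP HE mulmxDr {1}GDE -QP1.
  by rewrite -addrA addrACA subrr addr0 addrC.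
have resolvent : Phi *m B = Phi' *m (B *m Y) *m (Q *m H + P).
  rewrite -[RHS]mulmxA -[B *m Y *m _]mulmxA YM -[LHS]mul1mx -PhiL -mulmxA.
  congr (_ *m _); rewrite opprB addrCA mulmxDl [(Z - A) *m _]mulmxA PhiR mul1mx.
  by rewrite mulmxDr mulmx1 addrC !mulmxA.
set M := Q *m H + P in YM resolvent *; rewrite -!mulmxA in resolvent.
rewrite mulmxDl -[E *m Y *m M]mulmxA YM -!mulmxA -resolvent.
rewrite mulmxBl mulmxDr mulmx1 -!mulmxA.
by rewrite addrACA addNr addr0 addrCA mulmxDr.
Qed.

End SwapIdentity.

Definition transfer_at (F : fieldType) (nx m : nat) (Z A : 'M[F]_nx)
    (B : 'M[F]_(nx, m)) (C : 'M[F]_(m, nx)) (D : 'M[F]_m) : 'M[F]_m :=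
  C *m invmx (Z - A) *m B + D.

Section Conjugation.
Variables (F : fieldType) (nx m : nat) (K : {set 'I_m}).
Variables (A : 'M[F]_nx) (B : 'M[F]_(nx, m)) (C : 'M[F]_(m, nx)) (D : 'M[F]_m).
Hypothesis unitDK : subm D K K \in unitmx.

Local Notation Q := (projmx F K).
Local Notation P := (projmx F (~: K)).
Local Notation G := (conjG K D).

Lemma projmx_conjG : Q *m G = G.
Proof. by rewrite /conjG !mulmxA projmx_tr_selmx. Qed.

Lemma conjG_projmx : G *m Q = G.
Proof. by rewrite /conjG -mulmxA selmx_projmx. Qed.

Lemma conjG_projmxC : G *m P = 0.
Proof. by rewrite /conjG -mulmxA selmx_projmxC mulmx0. Qed.

Lemma conjG_mul_projmx : G *m D *m Q = Q.
Proof.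
rewrite /conjG -tr_selmx_mul -!mulmxA; congr (_ *m _).
by have := mulVmx unitDK; rewrite subm_selmx !mulmxA => ->; rewrite mul1mx.
Qed.

Lemma conjCE : conjC K C D = P *m C - (Q + P *m D) *m G *m C.
Proof. by rewrite /conjC !mulmxDl projmx_conjG opprD addrA !mulmxA. Qed.

Lemma conjDE : conjD K D = (Q + P *m D) *m (G + P - G *m D *m P).
Proof.
have := projmx_conjG; rewrite /conjD; move: (conjG K D) => g QgE.
rewrite !(mulmxDl, mulmxDr, mulmxBl, mulmxBr, mulmxN) !mulmxA QgE projmx_projmxC addr0.
by rewrite mulNmx !addrA.
Qed.

Lemma transfer_at_conj_swap (Z : 'M[F]_nx) :
    Z - A \in unitmx -> Z - conjA K A B C D \in unitmx ->
  transfer_at Z (conjA K A B C D) (conjB K B D) (conjC K C D) (conjD K D)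
    *m (Q *m transfer_at Z A B C D + P)
  = Q + P *m transfer_at Z A B C D.
Proof.
move=> unitZA unitZA'; rewrite /transfer_at conjCE conjDE.
apply: realization_swap_identity.
- exact: projmxDC.
- exact: projmxC_projmx.
- exact: projmx_idem.
- exact: conjG_projmx.
- exact: conjG_projmxC.
- exact: conjG_mul_projmx.
- exact: mulmxV unitZA.
- exact: mulVmx unitZA'.
Qed.

End Conjugation.

HB.instance Definition _ (R : fieldType) :=
  GRing.RMorphism.copy (@liftc R) (@tofrac _ \o polyC).

Section MapConjugation.
Variables (R S : fieldType) (f : {rmorphism R -> S}) (nx m : nat) (K : {set 'I_m}).
Variables (A : 'M[R]_nx) (B : 'M[R]_(nx, m)) (C : 'M[R]_(m, nx)) (D : 'M[R]_m).

Lemma map_selmx (L : {set 'I_m}) : map_mx f (selmx R L) = selmx S L.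
Proof. by apply/matrixP=> i j; rewrite !mxE rmorph_nat. Qed.

Lemma map_projmx (L : {set 'I_m}) : map_mx f (projmx R L) = projmx S L.
Proof. by apply/matrixP=> i j; rewrite !mxE rmorph_nat. Qed.

Lemma map_subm (M : 'M[R]_m) (L : {set 'I_m}) :
  map_mx f (subm M K L) = subm (map_mx f M) K L.
Proof. by apply/matrixP=> i j; rewrite !mxE. Qed.

Lemma map_conjG : map_mx f (conjG K D) = conjG K (map_mx f D).
Proof. by rewrite /conjG !map_mxM map_invmx !map_mxM -!map_trmx !map_selmx. Qed.

Lemma map_conjA :
  map_mx f (conjA K A B C D) = conjA K (map_mx f A) (map_mx f B) (map_mx f C) (map_mx f D).
Proof. by rewrite /conjA -map_conjG !(map_mxM, map_mxB). Qed.

Lemma map_conjB : map_mx f (conjB K B D) = conjB K (map_mx f B) (map_mx f D).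
Proof. by rewrite /conjB -map_conjG -map_projmx !(map_mxM, map_mxD, map_mxB, map_mxN). Qed.

Lemma map_conjC : map_mx f (conjC K C D) = conjC K (map_mx f C) (map_mx f D).
Proof. by rewrite /conjC -map_conjG -map_projmx !(map_mxM, map_mxB, map_mxN). Qed.

Lemma map_conjD : map_mx f (conjD K D) = conjD K (map_mx f D).
Proof. by rewrite /conjD -map_conjG -map_projmx !(map_mxM, map_mxD, map_mxB, map_mxN). Qed.

End MapConjugation.

Lemma zvar_sub_unitmx (R : fieldType) (n : nat) (M : 'M[R]_n) :
  (zvar R)%:M - map_mx (@liftc R) M \in unitmx.
Proof.
have -> : (zvar R)%:M - map_mx (@liftc R) M = map_mx (@tofrac _) (char_poly_mx M).
  by rewrite /char_poly_mx map_mxB map_scalar_mx -map_mx_comp.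
by rewrite unitmxE unitfE det_map_mx tofrac_eq0 monic_neq0 // char_poly_monic.
Qed.

Lemma transfer_conj_swap (R : fieldType) (nx m : nat) (K : {set 'I_m})
    (A : 'M[R]_nx) (B : 'M[R]_(nx, m)) (C : 'M[R]_(m, nx)) (D : 'M[R]_m) :
  subm D K K \in unitmx ->
  transfer (conjA K A B C D) (conjB K B D) (conjC K C D) (conjD K D)
    *m (projmx _ K *m transfer A B C D + projmx _ (~: K))
  = projmx _ K + projmx _ (~: K) *m transfer A B C D.
Proof.
move=> unitDK; rewrite /transfer map_conjA map_conjB map_conjC map_conjD.
apply: transfer_at_conj_swap; rewrite ?zvar_sub_unitmx //.
- by rewrite -map_subm map_unitmx.
- by rewrite -map_conjA zvar_sub_unitmx.
Qed.

Theorem proposition8p1 (R : fieldType) (n m nx nx2 : nat) (owner : 'I_m -> 'I_n)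
  (A : 'M[R]_nx) (B : 'M[R]_(nx, m)) (C : 'M[R]_(m, nx)) (D : 'M[R]_m)
  (A2 : 'M[R]_nx2) (B2 : 'M[R]_(nx2, m)) (C2 : 'M[R]_(m, nx2)) (D2 : 'M[R]_m)
  (kappa : {set 'I_n}) :
  let K := coords owner kappa in
  let L := ~: K in
  subm D K K \in unitmx ->
  let H := transfer A B C D in
  let H' := transfer A2 B2 C2 D2 in
  (is_conjugate owner kappa A B C D A2 B2 C2 D2 <->
   [/\ subm H' K K = invmx (subm H K K),
       subm H' K L = - (invmx (subm H K K) *m subm H K L),
       subm H' L K = subm H L K *m invmx (subm H K K)
     & subm H' L L = subm H L L - subm H L K *m invmx (subm H K K) *m subm H K L]).
Proof.
move=> K L unitDK H H'.
have swapT := subm_swap_blocks (transfer_conj_swap A B C unitDK).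
rewrite /H' /H /L /is_conjugate /oracle_equiv -/K.
split=> [-> // | [eKK eKL eLK eLL]]; case: swapT => tKK tKL tLK tLL.
by apply: (subm_blocks_inj (K := K)); rewrite ?(eKK, eKL, eLK, eLL, tKK, tKL, tLK, tLL).
Qed.
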